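(* Let $B$ be the residue code of an extremal Type~II $\mathbb{Z}_4$-code of length $n$. If $n=32$ then $6\le \dim(B)\le 16$, and if $n=40$ then $7\le\dim(B)\le 20$.
   Context: A $\mathbb{Z}_4$-code of length $n$ is a $\mathbb{Z}_4$-submodule of $\mathbb{Z}_4^n$; it is self-dual if it equals its dual with respect to $x\cdot y=\sum x_iy_i \pmod 4$. The Euclidean weight of $x$ is $n_1(x)+4n_2(x)+n_3(x)$, $n_\alpha(x)$ being the number of coordinates equal to $\alpha$. A Type~II $\mathbb{Z}_4$-code is a self-dual code all of whose codewords have Euclidean weight divisible by $8$; it is extremal if its minimum Euclidean weight equals $8\lfloor n/24\rfloor+8$. The residue code is $C^{(1)}=\{c\bmod 2: c\in C\}$, a binary linear code; $\dim$ denotes its dimension over $\mathbb{F}_2$. *)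

From HB Require Import structures.
From mathcomp Require Import all_boot all_order all_algebra.
Set Implicit Arguments. Unset Strict Implicit. Unset Printing Implicit Defensive.
Import GRing.Theory.
Local Open Scope ring_scope.

(* A Z4-code: a Z4-submodule of Z4^n, i.e. an additive subgroup
   (Z4-scalar multiplication is iterated addition). *)
Definition is_Z4code n (C : {set 'rV['Z_4]_n}) : Prop :=
  0 \in C /\ (forall x y, x \in C -> y \in C -> x - y \in C).

Definition z4dot n (x y : 'rV['Z_4]_n) : 'Z_4 := \sum_(i < n) x ord0 i * y ord0 i.

Definition z4dual n (C : {set 'rV['Z_4]_n}) : {set 'rV['Z_4]_n} :=
  [set x | [forall c in C, z4dot x c == 0]].

Definition self_dual n (C : {set 'rV['Z_4]_n}) : Prop := C = z4dual C.

Definition ncount n (a : 'Z_4) (x : 'rV['Z_4]_n) : nat := #|[set i | x ord0 i == a]|.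

Definition euclid_wt n (x : 'rV['Z_4]_n) : nat :=
  (ncount 1%R x + 4 * ncount 2%R x + ncount 3%R x)%N.

Definition typeII n (C : {set 'rV['Z_4]_n}) : Prop :=
  is_Z4code C /\ self_dual C /\ (forall c, c \in C -> 8 %| euclid_wt c)%N.

Definition min_euclid_wt n (C : {set 'rV['Z_4]_n}) (d : nat) : Prop :=
  (exists2 c, c \in C & (c != 0%R) /\ euclid_wt c = d) /\
  (forall c, c \in C -> c != 0%R -> d <= euclid_wt c)%N.

Definition extremal_typeII n (C : {set 'rV['Z_4]_n}) : Prop :=
  typeII C /\ min_euclid_wt C (8 * (n %/ 24) + 8)%N.

Definition mod2 n (x : 'rV['Z_4]_n) : 'rV['F_2]_n :=
  \row_i ((val (x ord0 i) %% 2)%N%:R : 'F_2).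

Definition residue n (C : {set 'rV['Z_4]_n}) : {set 'rV['F_2]_n} := (@mod2 n) @: C.

Definition bdim n (B : {set 'rV['F_2]_n}) : nat := \dim (<<enum B>>%VS).

From mathcomp Require Import all_boot all_order all_algebra zify.

(* Self-duality of C makes B self-orthogonal (c.d = 0 mod 4
     implies (c mod 2).(d mod 2) = 0 mod 2), and a self-orthogonal code has
     2k <= n: its generator matrix M is row-free with M M^T = 0.
   - Lower bound.  If w is orthogonal to B then 2w lies in C^perp = C, and
     the Euclidean weight of 2w is 4 wt(w); extremality (minimum Euclidean
     weight >= 16 once n >= 24) forces wt(w) >= 4.  So the kernel of M^T,
     i.e. the dual code of B, has minimum distance >= 4; then the 2n vectors
     e_i and e_0 + e_i have pairwise distinct syndromes, whence 2n <= 2^k. *)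

Set Implicit Arguments.
Unset Strict Implicit.
Unset Printing Implicit Defensive.
Import GRing.Theory.
Local Open Scope ring_scope.

Section Orthogonality.
Variables (F : fieldType) (n : nat).

Definition dotr (u v : 'rV[F]_n) : F := \sum_i u ord0 i * v ord0 i.

Lemma dotr_mx (u v : 'rV[F]_n) : (u *m v^T) ord0 ord0 = dotr u v.
Proof. by rewrite mxE; apply: eq_bigr => i _; rewrite mxE. Qed.

Lemma dotrC (u v : 'rV[F]_n) : dotr u v = dotr v u.
Proof. by apply: eq_bigr => i _; rewrite mulrC. Qed.

Lemma span_orth (X : seq 'rV[F]_n) w :
  (forall x, x \in X -> dotr x w = 0) ->
  forall v, v \in <<X>>%VS -> dotr v w = 0.
Proof.
move=> Xw v /(coord_span (X := in_tuple X)) ->.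
rewrite -dotr_mx mulmx_suml summxE; apply: big1 => i _.
by rewrite -scalemxAl mxE dotr_mx Xw ?mulr0 // mem_nth.
Qed.

(* A row-free matrix whose rows are pairwise orthogonal has at most n/2 rows:
   its row space lies in the kernel of its transpose. *)
Lemma self_orth_rank k (M : 'M[F]_(k, n)) :
  row_free M -> M *m M^T = 0 -> (2 * k <= n)%N.
Proof.
move=> /eqP freeM MMt.
have : (M <= kermx M^T)%MS by apply/sub_kermxP.
by move/mxrankS; rewrite mxrank_ker mxrank_tr freeM; lia.
Qed.

Variable V : {vspace 'rV[F]_n}.

Definition basis_mx : 'M[F]_(\dim V, n) := \matrix_(i < \dim V) (vbasis V)`_i.

Lemma basis_mx_row i : row i basis_mx = (vbasis V)`_i.
Proof. exact: rowK. Qed.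

Lemma basis_mx_mem i : row i basis_mx \in V.
Proof. by rewrite basis_mx_row vbasis_mem // mem_nth // size_tuple. Qed.

Lemma basis_mx_free : row_free basis_mx.
Proof.
rewrite -kermx_eq0; apply/rowV0P => r /sub_kermxP r0.
have /freeP freeX := basis_free (vbasisP V).
apply/rowP => i; rewrite mxE; apply: (freeX (fun j => r ord0 j)) => //.
rewrite -[RHS]r0 mulmx_sum_row; apply: eq_bigr => j _; by rewrite basis_mx_row.
Qed.

Lemma basis_mx_dual u : u *m basis_mx^T = 0 -> forall v, v \in V -> dotr v u = 0.
Proof.
move=> u0 v; rewrite -(span_basis (vbasisP V)).
apply: span_orth => _ /(nthP 0) [i ltiV <-].
rewrite size_tuple in ltiV.
rewrite dotrC -dotr_mx.
transitivity ((u *m basis_mx^T) ord0 (Ordinal ltiV)); last by rewrite u0 mxE.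
by rewrite !mxE; apply: eq_bigr => l _; rewrite !mxE.
Qed.

Lemma self_orth_dim :
  (forall u v, u \in V -> v \in V -> dotr u v = 0) -> (2 * \dim V <= n)%N.
Proof.
move=> orthV; apply: self_orth_rank basis_mx_free _.
apply/matrixP => i j; rewrite !mxE -[RHS](orthV _ _ (basis_mx_mem i) (basis_mx_mem j)).
by apply: eq_bigr => l _; rewrite !mxE.
Qed.

End Orthogonality.

Definition bwt n (w : 'rV['F_2]_n) : nat := #|[set i | w ord0 i != 0]|.

Section ParityCheckBound.
Variable m : nat.
Local Notation n := m.+1.

Definition test_word (p : bool * 'I_n) : 'rV['F_2]_n :=
  (p.1 : nat)%:R *: delta_mx 0 ord0 + delta_mx 0 p.2.

Lemma test_wordE p j :
  test_word p ord0 j = (p.1 : nat)%:R * (j == ord0)%:R + (j == p.2)%:R.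
Proof. by rewrite !mxE eqxx. Qed.

Lemma test_word_inj : injective test_word.
Proof.
move=> [b i] [c j] Egh.
have E l : test_word (b, i) ord0 l = test_word (c, j) ord0 l by rewrite Egh.
have eq_ij : i = j.
  case: (eqVneq i j) => // neq_ij.
  have [i0 | inz] := eqVneq i ord0.
    have := E j; rewrite !test_wordE /= (eq_sym j i) (negbTE neq_ij) eqxx.
    by rewrite -i0 eq_sym (negbTE neq_ij) !mulr0 !add0r.
  have := E i; rewrite !test_wordE /= (negbTE neq_ij) eqxx (negbTE inz).
  by rewrite !mulr0 !add0r.
subst j; have := E ord0; rewrite !test_wordE /= => /addIr.
by clear E Egh; case: b; case: c => // /eqP.
Qed.

Lemma test_word_diff_wt p q : (bwt (test_word p - test_word q) <= 3)%N.
Proof.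
have : [set i | (test_word p - test_word q) ord0 i != 0] \subset [:: ord0; p.2; q.2].
  apply/subsetP => l; rewrite inE !mxE !inE eqxx.
  case: (l =P ord0) => // _; case: (l =P p.2) => // _; case: (l =P q.2) => //= _.
  by rewrite !mulr0 !addr0 subrr eqxx.
by move/subset_leq_card/leq_trans; apply; apply: card_size.
Qed.

(* If the code with parity-check matrix M (k checks) has minimum distance
   at least 4, the test words have distinct syndromes, so 2n <= 2^k. *)
Lemma parity_check_bound k (M : 'M['F_2]_(k, n)) :
  (forall w : 'rV['F_2]_n, w *m M^T = 0 -> w != 0 -> (4 <= bwt w)%N) ->
  (2 * n <= 2 ^ k)%N.
Proof.
move=> distM.
have syndrome_inj : injective (fun p => test_word p *m M^T).
  move=> p q /eqP; rewrite -subr_eq0 -mulmxBl => /eqP synd0.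
  apply: test_word_inj; apply/eqP; rewrite -subr_eq0; apply/negPn/negP => nz.
  by have := leq_trans (distM _ synd0 nz) (test_word_diff_wt p q).
have := leq_card _ syndrome_inj.
by rewrite card_prod card_bool card_ord card_mx card_Fp // mul1n.
Qed.

End ParityCheckBound.

Lemma z4_nat0 N : ((N%:R : 'Z_4) = 0) <-> (4 %| N)%N.
Proof.
split => [E | /eqP N0]; last by apply/val_inj; rewrite /= val_Zp_nat // N0.
by have := val_Zp_nat (isT : (1 < 4)%N) N; rewrite E => /esym/eqP.
Qed.

Lemma f2_nat0 N : ((N%:R : 'F_2) = 0) <-> (2 %| N)%N.
Proof.
split => [E | /eqP N0]; last by apply/val_inj; rewrite /= val_Fp_nat // N0.
by have := @val_Fp_nat 2 isT N; rewrite E => /esym/eqP.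
Qed.

Lemma f2_cases (x : 'F_2) : x = 0 \/ x = 1.
Proof. by case: x => [[|[|]]] //= ?; [left | right]; apply/val_inj. Qed.

Section Residue.
Variable n : nat.
Implicit Types (C : {set 'rV['Z_4]_n}) (w : 'rV['F_2]_n).

Lemma z4dot_nat (x y : 'rV['Z_4]_n) :
  z4dot x y = (\sum_i (val (x ord0 i) * val (y ord0 i)))%N%:R.
Proof. by rewrite natr_sum; apply: eq_bigr => i _; rewrite natrM !natr_Zp. Qed.

Lemma dotr_mod2 (x y : 'rV['Z_4]_n) :
  dotr (mod2 x) (mod2 y) = (\sum_i (val (x ord0 i) * val (y ord0 i)))%N%:R.
Proof. by rewrite natr_sum; apply: eq_bigr => i _; rewrite !mxE natrM !Fp_nat_mod. Qed.

Lemma residue_orth C : self_dual C ->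
  forall x y, x \in residue C -> y \in residue C -> dotr x y = 0.
Proof.
move=> sdC _ _ /imsetP [c Cc ->] /imsetP [d Cd ->].
have : c \in z4dual C by rewrite -sdC.
rewrite inE => /forall_inP /(_ d Cd) /eqP.
rewrite z4dot_nat dotr_mod2 => /z4_nat0 dvd4.
by apply/f2_nat0; apply: dvdn_trans dvd4.
Qed.

Lemma residue_span_orth C : self_dual C ->
  forall u v, u \in <<enum (residue C)>>%VS -> v \in <<enum (residue C)>>%VS ->
  dotr u v = 0.
Proof.
move=> sdC u v Bu Bv; apply: span_orth Bu => y; rewrite mem_enum => By.
rewrite dotrC; apply: span_orth Bv => x; rewrite mem_enum => Bx.
exact (residue_orth sdC Bx By).
Qed.

Definition lift2 w : 'rV['Z_4]_n := \row_i (if w ord0 i == 0 then 0 else 2).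

Lemma lift2_in C w : self_dual C ->
  (forall b, b \in residue C -> dotr b w = 0) -> lift2 w \in C.
Proof.
move=> sdC orth_w; rewrite sdC inE; apply/forall_inP => c Cc.
pose N := (\sum_i (if w ord0 i == 0%R then 0 else val (c ord0 i)))%N.
have dot2 : dotr (mod2 c) w = N%:R.
  rewrite /dotr natr_sum; apply: eq_bigr => i _; rewrite mxE.
  by case: (f2_cases (w ord0 i)) => ->; rewrite ?mulr0 ?mulr1 ?Fp_nat_mod.
have dot4 : z4dot (lift2 w) c = (2 * N)%N%:R.
  rewrite /z4dot big_distrr natr_sum; apply: eq_bigr => i _; rewrite mxE.
  by case: ifP => _; rewrite ?mul0r ?muln0 // natrM natr_Zp.
have /f2_nat0 even_N : (N%:R : 'F_2) = 0 by rewrite -dot2 orth_w ?imset_f.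
by rewrite dot4; apply/eqP/z4_nat0; rewrite (_ : 4 = 2 * 2)%N // dvdn_pmul2l.
Qed.

(* Each nonzero coordinate of w becomes a 2, of Euclidean weight 4. *)
Lemma lift2_wt w : euclid_wt (lift2 w) = (4 * bwt w)%N.
Proof.
rewrite /euclid_wt /ncount.
have -> : [set i | lift2 w ord0 i == 1] = set0.
  by apply/setP => i; rewrite !inE mxE; case: (w ord0 i == 0).
have -> : [set i | lift2 w ord0 i == 3%:R] = set0.
  by apply/setP => i; rewrite !inE mxE; case: (w ord0 i == 0).
have -> : [set i | lift2 w ord0 i == 2%:R] = [set i | w ord0 i != 0].
  by apply/setP => i; rewrite !inE mxE; case: (w ord0 i == 0).
by rewrite cards0 addn0.
Qed.

Lemma lift2_nz w : w != 0 -> lift2 w != 0.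
Proof.
apply: contraNneq => lift0; apply/eqP/rowP => i.
by have := congr1 (fun x : 'rV['Z_4]_n => x ord0 i) lift0; rewrite !mxE; case: eqP.
Qed.

Lemma residue_dual_wt C : extremal_typeII C -> (24 <= n)%N ->
  forall w, (forall b, b \in residue C -> dotr b w = 0) -> w != 0 ->
  (4 <= bwt w)%N.
Proof.
move=> [[_ [sdC _]] [_ minC]] n24 w orth_w nz_w.
have := minC _ (lift2_in sdC orth_w) (lift2_nz nz_w).
by rewrite lift2_wt; lia.
Qed.

Lemma residue_dim_upper C : self_dual C -> (2 * bdim (residue C) <= n)%N.
Proof. by move=> sdC; apply/self_orth_dim/residue_span_orth. Qed.

End Residue.

Lemma residue_dim_lower n (C : {set 'rV['Z_4]_n}) :
  extremal_typeII C -> (24 <= n)%N -> (2 * n <= 2 ^ bdim (residue C))%N.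
Proof.
case: n C => [|m] C extC n24 //.
apply: (parity_check_bound (M := basis_mx _)) => w w0 nz_w.
apply: (residue_dual_wt extC n24 _ nz_w) => b Bb.
by apply: (basis_mx_dual w0); rewrite memv_span ?mem_enum.
Qed.

Theorem mainTheorem2 (n : nat) (C : {set 'rV['Z_4]_n}) :
  extremal_typeII C ->
  (n = 32 -> 6 <= bdim (residue C) <= 16)%N /\
  (n = 40 -> 7 <= bdim (residue C) <= 20)%N.
Proof.
move=> extC.
have upper := residue_dim_upper extC.1.2.1.
have lower := residue_dim_lower extC.
split=> en; subst n.
  have : (2 ^ 6 <= 2 ^ bdim (residue C))%N by apply: leq_trans (lower isT).
  by rewrite leq_exp2l //; lia.
have : (2 ^ 6 < 2 ^ bdim (residue C))%N by apply: leq_trans (lower isT).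
by rewrite ltn_exp2l //; lia.
Qed.
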